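(* Let $\mathcal{H}$ be a complex Hilbert space, $R,S\in\mathbb{B}(\mathcal{H})$, and let $T=\begin{bmatrix}0&R\\ S&0\end{bmatrix}$, regarded as an operator on $\mathcal{H}\oplus\mathcal{H}$. If $(\|R\|+\|S\|)^2\le 2\,g(T)$, where \[ g(T)=\|T\|^2+\max\big(\alpha(T),\alpha(T^* )\big)-D(T), \] then \[ \omega(T)=\frac{\|R\|+\|S\|}{2}. \]
   Context: $\mathbb{B}(\mathcal{H})$ denotes the bounded linear operators on $\mathcal{H}$. For a bounded operator $A$ on a Hilbert space $\mathcal{K}$ (here $\mathcal{K}=\mathcal{H}\oplus\mathcal{H}$): $\omega(A)=\sup\{|\langle Ax,x\rangle| : x\in\mathcal{K},\ \|x\|=1\}$ (numerical radius); $\|A\|$ is the operator norm; $\alpha(A)=\inf_{\|x\|=1}\|Ax\|^2$; $D(A)=2\min(\|A_1\|^2,\|A_2\|^2)$ where $A_1=\frac{A+A^*}{2}$, $A_2=\frac{A-A^*}{2i}$. *)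

From Stdlib Require Import Reals Lra ClassicalEpsilon.
Open Scope R_scope.

Record Cplx := mkC { re : R; im : R }.
Definition C0 := mkC 0 0.
Definition C1 := mkC 1 0.
Definition Cadd (a b : Cplx) := mkC (re a + re b) (im a + im b).
Definition Cmul (a b : Cplx) :=
  mkC (re a * re b - im a * im b) (re a * im b + im a * re b).
Definition Cconj (a : Cplx) := mkC (re a) (- im a).
Definition Cmod (a : Cplx) := sqrt (re a ^ 2 + im a ^ 2).

(** * Real supremum / infimum (total, classical).
    Rsup E is the least upper bound when E is nonempty and bounded above,
    and 0 otherwise; Rinf E := - Rsup (-E). *)
Definition Rsup (E : R -> Prop) : R :=
  match excluded_middle_informative (bound E /\ exists x, E x) with
  | left h => proj1_sig (completeness E (proj1 h) (proj2 h))
  | right _ => 0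
  end.
Definition Rinf (E : R -> Prop) : R := - Rsup (fun r => E (- r)).

Record IPS := mkIPS {
  ips_car :> Type;
  ips_add : ips_car -> ips_car -> ips_car;
  ips_scal : Cplx -> ips_car -> ips_car;
  ips_ip : ips_car -> ips_car -> Cplx }.

Record CHilbert := {
  hcar :> Type;
  vzero : hcar;
  vadd : hcar -> hcar -> hcar;
  vopp : hcar -> hcar;
  vscal : Cplx -> hcar -> hcar;
  vinner : hcar -> hcar -> Cplx;
  vadd_assoc : forall x y z, vadd x (vadd y z) = vadd (vadd x y) z;
  vadd_comm : forall x y, vadd x y = vadd y x;
  vadd_0 : forall x, vadd x vzero = x;
  vadd_opp : forall x, vadd x (vopp x) = vzero;
  vscal_1 : forall x, vscal C1 x = x;
  vscal_assoc : forall a b x, vscal a (vscal b x) = vscal (Cmul a b) x;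
  vscal_distr_v : forall a x y, vscal a (vadd x y) = vadd (vscal a x) (vscal a y);
  vscal_distr_c : forall a b x, vscal (Cadd a b) x = vadd (vscal a x) (vscal b x);
  inner_add_l : forall x y z, vinner (vadd x y) z = Cadd (vinner x z) (vinner y z);
  inner_scal_l : forall a x y, vinner (vscal a x) y = Cmul a (vinner x y);
  inner_conj : forall x y, vinner y x = Cconj (vinner x y);
  inner_pos : forall x, 0 <= re (vinner x x);
  inner_def : forall x, vinner x x = C0 -> x = vzero;
  complete : forall u : nat -> hcar,
    (forall eps, eps > 0 -> exists N, forall m n, (m >= N)%nat -> (n >= N)%nat ->
        sqrt (re (vinner (vadd (u m) (vopp (u n))) (vadd (u m) (vopp (u n))))) < eps) ->
    exists l, forall eps, eps > 0 -> exists N, forall n, (n >= N)%nat ->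
        sqrt (re (vinner (vadd (u n) (vopp l)) (vadd (u n) (vopp l)))) < eps }.

Definition hnorm (H : CHilbert) (x : H) : R := sqrt (re (vinner H x x)).

Definition bounded_linear (H : CHilbert) (A : H -> H) : Prop :=
  (forall x y, A (vadd H x y) = vadd H (A x) (A y)) /\
  (forall a x, A (vscal H a x) = vscal H a (A x)) /\
  (exists M, forall x, hnorm H (A x) <= M * hnorm H x).

Definition is_adjoint (H : CHilbert) (A Aa : H -> H) : Prop :=
  forall x y, vinner H (A x) y = vinner H x (Aa y).

Definition dsum (H : CHilbert) : IPS :=
  mkIPS (H * H)
    (fun z w => (vadd H (fst z) (fst w), vadd H (snd z) (snd w)))
    (fun a z => (vscal H a (fst z), vscal H a (snd z)))
    (fun z w => Cadd (vinner H (fst z) (fst w)) (vinner H (snd z) (snd w))).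

Section Ops.
Variable K : IPS.
Definition ipnorm (x : K) : R := sqrt (re (ips_ip K x x)).
Definition opnorm (A : K -> K) : R :=
  Rsup (fun r => exists x, ipnorm x <= 1 /\ r = ipnorm (A x)).
Definition numrad (A : K -> K) : R :=
  Rsup (fun r => exists x, ipnorm x = 1 /\ r = Cmod (ips_ip K (A x) x)).
Definition alpha (A : K -> K) : R :=
  Rinf (fun r => exists x, ipnorm x = 1 /\ r = ipnorm (A x) ^ 2).
(* D(A) = 2 min(||A_1||^2, ||A_2||^2), A_1 = (A+A^* )/2, A_2 = (A-A^* )/(2i);
   Aa is the adjoint A^* *)
Definition Dq (A Aa : K -> K) : R :=
  2 * Rmin
    (opnorm (fun x => ips_scal K (mkC (1/2) 0) (ips_add K (A x) (Aa x))) ^ 2)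
    (opnorm (fun x => ips_scal K (mkC 0 (-(1/2)))
                        (ips_add K (A x) (ips_scal K (mkC (-1) 0) (Aa x)))) ^ 2).
Definition gq (A Aa : K -> K) : R :=
  opnorm A ^ 2 + Rmax (alpha A) (alpha Aa) - Dq A Aa.
End Ops.

(** T = [[0, R],[S, 0]] on H (+) H, and its adjoint [[0, S^*],[R^*, 0]]. *)
Definition offdiag (H : CHilbert) (A B : H -> H) : dsum H -> dsum H :=
  fun z => (A (snd z), B (fst z)).

Definition hopnorm (H : CHilbert) (A : H -> H) : R :=
  Rsup (fun r => exists x, hnorm H x <= 1 /\ r = hnorm H (A x)).

(** The upper bound [ω(T) <= (‖R‖ + ‖S‖)/2] is Cauchy–Schwarz applied to
    [⟨Tz, z⟩ = ⟨Ry, x⟩ + ⟨Sx, y⟩] for [z = (x, y)].  The lower bound comes from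
    the inequality [g(T) <= 2 ω(T)^2], valid for every bounded [T]: the Cartesian
    parts [Re T = (T + T^* )/2] and [Im T = (T - T^* )/2i] have norm at most [ω(T)],
    and [‖Re T z‖^2 + ‖Im T z‖^2 = (‖Tz‖^2 + ‖T^* z‖^2)/2], so for unit [z]
    [‖Tz‖^2 + ‖T^* z‖^2 <= 2 ω(T)^2 + D(T)]; bounding [‖Tz‖^2] and [‖T^* z‖^2]
    separately against [α(T^* )] and [α(T)] yields
    [‖T‖^2 + max(α(T), α(T^* )) <= 2 ω(T)^2 + D(T)].  The hypothesis then reads
    [(‖R‖ + ‖S‖)^2 <= 4 ω(T)^2]. *)

From Stdlib Require Import Reals Lra Psatz Classical ClassicalEpsilon.
Open Scope R_scope.

Lemma Rsup_upper (E : R -> Prop) x : bound E -> E x -> x <= Rsup E.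
Proof.
  intros HE Ex; unfold Rsup.
  destruct (excluded_middle_informative _) as [h|h].
  - destruct (completeness E _ _) as [s [Hub Hlub]]; simpl; auto.
  - exfalso; apply h; split; eauto.
Qed.

Lemma Rsup_least (E : R -> Prop) M :
  (forall x, E x -> x <= M) -> 0 <= M -> Rsup E <= M.
Proof.
  intros HM M0; unfold Rsup.
  destruct (excluded_middle_informative _) as [h|h]; [|lra].
  destruct (completeness E _ _) as [s [Hub Hlub]]; simpl; auto.
Qed.

Lemma Rsup_nonneg (E : R -> Prop) : (forall x, E x -> 0 <= x) -> 0 <= Rsup E.
Proof.
  intros HE; unfold Rsup.
  destruct (excluded_middle_informative _) as [h|h]; [|lra].
  destruct (completeness E _ _) as [s [Hub Hlub]]; simpl.
  destruct h as [_ [x Ex]]; specialize (Hub x Ex); specialize (HE x Ex); lra.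
Qed.

Lemma Rinf_lower (E : R -> Prop) m x :
  (forall y, E y -> m <= y) -> E x -> Rinf E <= x.
Proof.
  intros Hm Ex; unfold Rinf.
  enough (- x <= Rsup (fun r => E (- r))) by lra.
  apply Rsup_upper.
  - exists (- m); intros r Er; specialize (Hm _ Er); lra.
  - now rewrite Ropp_involutive.
Qed.

Lemma Rinf_empty (E : R -> Prop) : (forall x, ~ E x) -> Rinf E = 0.
Proof.
  intros HE; unfold Rinf, Rsup.
  destruct (excluded_middle_informative _) as [h|h]; [|lra].
  exfalso; destruct h as [_ [x Ex]]; exact (HE _ Ex).
Qed.

Lemma le_sqrt_of_sqr_le x y : x * x <= y -> x <= sqrt y.
Proof.
  intros H; destruct (Rle_or_lt x 0) as [Hx|Hx].
  - pose proof (sqrt_pos y); lra.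
  - rewrite <- (sqrt_square x) by lra; now apply sqrt_le_1_alt.
Qed.

Lemma sqrt_le_of_le_sqr y s : 0 <= s -> y <= s * s -> sqrt y <= s.
Proof.
  intros Hs H; rewrite <- (sqrt_square s) by lra; now apply sqrt_le_1_alt.
Qed.

Lemma pow2_le_of_le_sqrt a b : 0 <= a -> 0 <= b -> a <= sqrt b -> a ^ 2 <= b.
Proof.
  intros Ha Hb H; rewrite <- (sqrt_sqrt b) by exact Hb; pose proof (sqrt_pos b); nra.
Qed.

Lemma Cplx_ext a b : re a = re b -> im a = im b -> a = b.
Proof. destruct a, b; simpl; intros; subst; reflexivity. Qed.

Definition Cnorm2 (p : Cplx) := re p ^ 2 + im p ^ 2.

Lemma Cnorm2_nonneg p : 0 <= Cnorm2 p.
Proof. unfold Cnorm2; nra. Qed.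

Lemma Cmod_nonneg p : 0 <= Cmod p.
Proof. apply sqrt_pos. Qed.

Lemma Cmod_bounds_re_im p :
  - Cmod p <= re p <= Cmod p /\ - Cmod p <= im p <= Cmod p.
Proof.
  assert (Hle : forall x, x * x <= re p ^ 2 + im p ^ 2 -> x <= Cmod p)
    by (intros; now apply le_sqrt_of_sqr_le).
  repeat split; [cut (- re p <= Cmod p); [lra|] | | cut (- im p <= Cmod p); [lra|] |];
    apply Hle; nra.
Qed.

Lemma Cmod_triangle p q : Cmod (Cadd p q) <= Cmod p + Cmod q.
Proof.
  destruct p as [a b], q as [c d]; unfold Cmod; cbn [re im Cadd].
  pose proof (sqrt_cauchy a b c d) as Hcs; unfold Rsqr in Hcs.
  replace (a * a + b * b) with (a ^ 2 + b ^ 2) in Hcs by ring.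
  replace (c * c + d * d) with (c ^ 2 + d ^ 2) in Hcs by ring.
  assert (Hp : sqrt (a ^ 2 + b ^ 2) * sqrt (a ^ 2 + b ^ 2) = a ^ 2 + b ^ 2)
    by (apply sqrt_sqrt; nra).
  assert (Hq : sqrt (c ^ 2 + d ^ 2) * sqrt (c ^ 2 + d ^ 2) = c ^ 2 + d ^ 2)
    by (apply sqrt_sqrt; nra).
  pose proof (sqrt_pos (a ^ 2 + b ^ 2)); pose proof (sqrt_pos (c ^ 2 + d ^ 2)).
  set (sp := sqrt (a ^ 2 + b ^ 2)) in *; set (sq := sqrt (c ^ 2 + d ^ 2)) in *.
  apply sqrt_le_of_le_sqr; [lra|].
  nra.
Qed.

Lemma Cmod_mul_real r p : 0 <= r -> Cmod (Cmul (mkC r 0) p) = r * Cmod p.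
Proof.
  intros Hr; unfold Cmod; cbn [re im Cmul].
  replace ((r * re p - 0 * im p) ^ 2 + (r * im p + 0 * re p) ^ 2)
    with ((r * r) * (re p ^ 2 + im p ^ 2)) by ring.
  rewrite sqrt_mult, sqrt_square; nra.
Qed.

Definition re_part (K : IPS) (A Aa : K -> K) (x : K) : K :=
  ips_scal K (mkC (1/2) 0) (ips_add K (A x) (Aa x)).

Definition im_part (K : IPS) (A Aa : K -> K) (x : K) : K :=
  ips_scal K (mkC 0 (-(1/2))) (ips_add K (A x) (ips_scal K (mkC (-1) 0) (Aa x))).

Lemma Dq_cartesian (K : IPS) (A Aa : K -> K) :
  Dq K A Aa = 2 * Rmin (opnorm K (re_part K A Aa) ^ 2) (opnorm K (im_part K A Aa) ^ 2).
Proof. reflexivity. Qed.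

Definition is_inner_product (K : IPS) : Prop :=
  (forall x y z, ips_ip K (ips_add K x y) z = Cadd (ips_ip K x z) (ips_ip K y z)) /\
  (forall a x y, ips_ip K (ips_scal K a x) y = Cmul a (ips_ip K x y)) /\
  (forall x y, ips_ip K y x = Cconj (ips_ip K x y)) /\
  (forall x, 0 <= re (ips_ip K x x)).

Section InnerProductSpace.

Variable K : IPS.
Hypothesis HK : is_inner_product K.

Local Notation ip := (ips_ip K).
Local Notation nsq x := (re (ips_ip K x x)).
Local Notation scale r := (ips_scal K (mkC r 0)).

Lemma ip_addl x y z : ip (ips_add K x y) z = Cadd (ip x z) (ip y z).
Proof. apply HK. Qed.

Lemma ip_scall a x y : ip (ips_scal K a x) y = Cmul a (ip x y).
Proof. apply HK. Qed.

Lemma ip_conj x y : ip y x = Cconj (ip x y).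
Proof. apply HK. Qed.

Lemma nsq_nonneg x : 0 <= nsq x.
Proof. apply HK. Qed.

Lemma ip_addr x y z : ip x (ips_add K y z) = Cadd (ip x y) (ip x z).
Proof.
  rewrite (ip_conj (ips_add K y z) x), ip_addl, (ip_conj x y), (ip_conj x z).
  apply Cplx_ext; simpl; lra.
Qed.

Lemma ip_scalr a x y : ip x (ips_scal K a y) = Cmul (Cconj a) (ip x y).
Proof.
  rewrite (ip_conj (ips_scal K a y) x), ip_scall, (ip_conj x y).
  apply Cplx_ext; simpl; lra.
Qed.

Lemma ip_self x : ip x x = mkC (nsq x) 0.
Proof.
  pose proof (ip_conj x x) as Hc; apply Cplx_ext; simpl; auto.
  destruct (ip x x) as [a b]; simpl in *; injection Hc; lra.
Qed.

Ltac ip_expand :=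
  repeat rewrite ?ip_addl, ?ip_addr, ?ip_scall, ?ip_scalr.

(* Expand [0 <= ‖s x - t ⟨x,y⟩ y‖^2] as a quadratic form in real [s], [t]. *)
Lemma Cauchy_Schwarz_sqr x y : Cnorm2 (ip x y) <= nsq x * nsq y.
Proof.
  assert (Hq : forall s t,
    0 <= s * s * nsq x - 2 * s * t * Cnorm2 (ip x y) + t * t * Cnorm2 (ip x y) * nsq y).
  { intros s t.
    pose proof (nsq_nonneg
      (ips_add K (scale s x) (ips_scal K (Cmul (mkC (- t) 0) (ip x y)) y))) as Hn.
    revert Hn; ip_expand.
    rewrite (ip_conj x y), (ip_self x), (ip_self y); unfold Cnorm2; simpl; nra. }
  pose proof (nsq_nonneg x); pose proof (nsq_nonneg y); pose proof (Cnorm2_nonneg (ip x y)).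
  set (a := nsq x) in *; set (b := nsq y) in *; set (q := Cnorm2 (ip x y)) in *.
  destruct (Req_dec b 0) as [Hb|Hb].
  - destruct (Req_dec q 0) as [Hq0|Hq0]; [nra|].
    specialize (Hq 1 ((a + 1) / (2 * q))); rewrite Hb in Hq.
    assert (2 * 1 * ((a + 1) / (2 * q)) * q = a + 1) by (field; auto); nra.
  - specialize (Hq b 1); nra.
Qed.

Lemma ipnorm_nonneg x : 0 <= ipnorm K x.
Proof. apply sqrt_pos. Qed.

Lemma ipnorm_sqr x : ipnorm K x * ipnorm K x = nsq x.
Proof. apply sqrt_sqrt, nsq_nonneg. Qed.

Lemma ipnorm_pow2 x : ipnorm K x ^ 2 = nsq x.
Proof. rewrite <- ipnorm_sqr; ring. Qed.

Lemma Cauchy_Schwarz x y : Cmod (ip x y) <= ipnorm K x * ipnorm K y.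
Proof.
  pose proof (ipnorm_nonneg x); pose proof (ipnorm_nonneg y).
  apply sqrt_le_of_le_sqr; [nra|].
  replace (ipnorm K x * ipnorm K y * (ipnorm K x * ipnorm K y))
    with (ipnorm K x * ipnorm K x * (ipnorm K y * ipnorm K y)) by ring.
  rewrite !ipnorm_sqr; apply Cauchy_Schwarz_sqr.
Qed.

Lemma re_ip_le x y : re (ip x y) <= ipnorm K x * ipnorm K y.
Proof.
  pose proof (Cmod_bounds_re_im (ip x y)); pose proof (Cauchy_Schwarz x y); lra.
Qed.

Lemma nsq_scale r x : nsq (scale r x) = r * r * nsq x.
Proof. ip_expand; rewrite (ip_self x); simpl; ring. Qed.

Lemma ipnorm_scale r x : 0 <= r -> ipnorm K (scale r x) = r * ipnorm K x.
Proof.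
  intros Hr; unfold ipnorm; rewrite nsq_scale, sqrt_mult, sqrt_square;
    auto using nsq_nonneg; nra.
Qed.

Lemma nsq_le1_of_ipnorm_le1 x : ipnorm K x <= 1 -> nsq x <= 1.
Proof. intros H; rewrite <- ipnorm_sqr; pose proof (ipnorm_nonneg x); nra. Qed.

Lemma null_or_normalizable x :
  ipnorm K x = 0 \/
  0 < ipnorm K x /\ ipnorm K (scale (/ ipnorm K x) x) = 1.
Proof.
  destruct (Req_dec (ipnorm K x) 0) as [H0|H0]; [now left|right].
  pose proof (ipnorm_nonneg x).
  split; [lra|]; rewrite ipnorm_scale; [field; lra|].
  left; apply Rinv_0_lt_compat; lra.
Qed.

Lemma opnorm_nonneg (A : K -> K) : 0 <= opnorm K A.
Proof. apply Rsup_nonneg; intros r [x [_ ->]]; apply ipnorm_nonneg. Qed.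

Lemma numrad_nonneg (A : K -> K) : 0 <= numrad K A.
Proof. apply Rsup_nonneg; intros r [x [_ ->]]; apply Cmod_nonneg. Qed.

Lemma ipnorm_le_opnorm (A : K -> K) M :
  (forall x, ipnorm K x <= 1 -> ipnorm K (A x) <= M) ->
  forall z, ipnorm K z <= 1 -> ipnorm K (A z) <= opnorm K A.
Proof.
  intros HM z Hz; apply Rsup_upper; [|eauto].
  exists M; intros r [x [Hx ->]]; auto.
Qed.

Lemma opnorm_bound (A : K -> K) :
  (forall r x, A (scale r x) = scale r (A x)) ->
  (exists M, forall x, ipnorm K (A x) <= M * ipnorm K x) ->
  forall x, ipnorm K (A x) <= opnorm K A * ipnorm K x.
Proof.
  intros Ahom [M HM] x.
  assert (Hball : forall z, ipnorm K z <= 1 -> ipnorm K (A z) <= Rabs M).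
  { intros z Hz; specialize (HM z); pose proof (ipnorm_nonneg z).
    pose proof (Rle_abs M); pose proof (Rabs_pos M); nra. }
  destruct (null_or_normalizable x) as [Hx0|[Hxpos Hu]].
  - specialize (HM x); rewrite Hx0 in HM |- *; pose proof (ipnorm_nonneg (A x)); lra.
  - pose proof (ipnorm_le_opnorm A _ Hball _ (Req_le _ _ Hu)) as Hop.
    rewrite Ahom, ipnorm_scale in Hop by (left; apply Rinv_0_lt_compat; lra).
    apply (Rmult_le_compat_r (ipnorm K x)) in Hop; [|lra].
    now replace (/ ipnorm K x * ipnorm K (A x) * ipnorm K x) with (ipnorm K (A x))
      in Hop by (field; lra).
Qed.

Lemma alpha_le (A : K -> K) z : ipnorm K z = 1 -> alpha K A <= nsq (A z).
Proof.
  intros Hz; rewrite <- ipnorm_pow2; apply Rinf_lower with (m := 0).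
  - intros y [x [_ ->]]; apply pow2_ge_0.
  - exists z; auto.
Qed.

Lemma alpha_no_unit (A : K -> K) : (forall z, ipnorm K z <> 1) -> alpha K A = 0.
Proof. intros H; apply Rinf_empty; intros r [x [Hx _]]; exact (H x Hx). Qed.

(* Take [y = v / w] (and [y = v] when [w = 0]). *)
Lemma nsq_le_of_re_ip_le v w :
  0 <= w -> (forall y, 2 * re (ip v y) <= w * (1 + nsq y)) -> nsq v <= w ^ 2.
Proof.
  intros Hw Hv; pose proof (nsq_nonneg v).
  assert (Ht : forall t, 2 * t * nsq v <= w * (1 + t * t * nsq v)).
  { intros t; specialize (Hv (scale t v)); rewrite nsq_scale in Hv.
    revert Hv; ip_expand; rewrite (ip_self v); simpl; nra. }
  destruct (Req_dec w 0) as [->|Hw0].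
  - specialize (Ht 1); nra.
  - specialize (Ht (/ w)).
    apply (Rmult_le_compat_l (w / 2)) in Ht; [|lra].
    replace (w / 2 * (2 * / w * nsq v)) with (nsq v) in Ht by (field; lra).
    replace (w / 2 * (w * (1 + / w * / w * nsq v))) with (w * w / 2 + nsq v / 2) in Ht
      by (field; lra).
    nra.
Qed.

Section Adjointable.

Variables T Ta : K -> K.
Hypothesis T_additive : forall x y, T (ips_add K x y) = ips_add K (T x) (T y).
Hypothesis T_homogeneous : forall a x, T (ips_scal K a x) = ips_scal K a (T x).
Hypothesis T_bounded : exists M, forall x, ipnorm K (T x) <= M * ipnorm K x.
Hypothesis T_adjoint : forall x y, ip (T x) y = ip x (Ta y).

Lemma ipnorm_image_null z : ipnorm K z = 0 -> ipnorm K (T z) = 0.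
Proof.
  intros Hz; pose proof (re_ip_le z (Ta (T z))) as Hle.
  rewrite <- T_adjoint, Hz, Rmult_0_l, <- ipnorm_sqr in Hle.
  pose proof (ipnorm_nonneg (T z)); nra.
Qed.

Lemma opnorm_le_of_unit m :
  0 <= m -> (forall z, ipnorm K z = 1 -> ipnorm K (T z) <= m) -> opnorm K T <= m.
Proof.
  intros Hm Hunit; apply Rsup_least; auto; intros r [z [Hz ->]].
  destruct (null_or_normalizable z) as [Hz0|[Hzpos Hu]].
  - rewrite ipnorm_image_null; auto.
  - specialize (Hunit _ Hu).
    rewrite T_homogeneous, ipnorm_scale in Hunit by (left; apply Rinv_0_lt_compat; lra).
    apply (Rmult_le_compat_l (ipnorm K z)) in Hunit; [|lra].
    replace (ipnorm K z * (/ ipnorm K z * ipnorm K (T z))) with (ipnorm K (T z)) in Hunit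
      by (field; lra).
    nra.
Qed.

(* [‖Tz‖ = re ⟨Tz, w⟩ = re ⟨z, T^* w⟩] for the unit vector [w = Tz / ‖Tz‖]. *)
Lemma opnorm_le_of_adjoint_unit m :
  0 <= m -> (forall w, ipnorm K w = 1 -> ipnorm K (Ta w) <= m) -> opnorm K T <= m.
Proof.
  intros Hm Hunit; apply Rsup_least; auto; intros r [z [Hz ->]].
  destruct (null_or_normalizable (T z)) as [Hz0|[Hpos Hu]]; [lra|].
  set (w := scale (/ ipnorm K (T z)) (T z)) in Hu.
  assert (Hw : re (ip (T z) w) = ipnorm K (T z)).
  { unfold w; ip_expand; rewrite (ip_self (T z)); simpl.
    rewrite <- ipnorm_sqr; field; lra. }
  rewrite T_adjoint in Hw.
  pose proof (re_ip_le z (Ta w)); pose proof (Hunit _ Hu).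
  pose proof (ipnorm_nonneg z); pose proof (ipnorm_nonneg (Ta w)); nra.
Qed.

Lemma Cmod_ip_le_numrad w : Cmod (ip (T w) w) <= numrad K T * nsq w.
Proof.
  pose proof (numrad_nonneg T) as Hw0.
  destruct (null_or_normalizable w) as [Hw|[Hpos Hu]].
  - pose proof (Cauchy_Schwarz (T w) w); rewrite Hw, Rmult_0_r in *.
    pose proof (Cmod_nonneg (ip (T w) w)); rewrite <- ipnorm_sqr, Hw; lra.
  - set (s := ipnorm K w) in *.
    assert (Hbd : Cmod (ip (T (scale (/ s) w)) (scale (/ s) w)) <= numrad K T).
    { apply Rsup_upper; [|eauto].
      destruct T_bounded as [M HM]; exists (Rabs M); intros r [x [Hx ->]].
      pose proof (Cauchy_Schwarz (T x) x); specialize (HM x); rewrite Hx in *.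
      pose proof (Rle_abs M); lra. }
    replace (ip (T (scale (/ s) w)) (scale (/ s) w))
      with (Cmul (mkC (/ s * / s) 0) (ip (T w) w)) in Hbd.
    2: { rewrite T_homogeneous; ip_expand; apply Cplx_ext; simpl; ring. }
    assert (0 < / s) by (apply Rinv_0_lt_compat; lra).
    rewrite Cmod_mul_real in Hbd by nra.
    rewrite <- ipnorm_sqr; fold s.
    apply (Rmult_le_compat_l (s * s)) in Hbd; [|nra].
    replace (s * s * (/ s * / s * Cmod (ip (T w) w))) with (Cmod (ip (T w) w)) in Hbd
      by (field; lra).
    lra.
Qed.

Lemma re_im_ip_le_numrad w :
  - (numrad K T * nsq w) <= re (ip (T w) w) <= numrad K T * nsq w /\
  - (numrad K T * nsq w) <= im (ip (T w) w) <= numrad K T * nsq w.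
Proof.
  pose proof (Cmod_bounds_re_im (ip (T w) w)); pose proof (Cmod_ip_le_numrad w); lra.
Qed.

(* Polarization: apply [re_im_ip_le_numrad] to [x + y] and [x - y]. *)
Lemma re_ip_parts_le x y :
  2 * re (ip (re_part K T Ta x) y) <= numrad K T * (nsq x + nsq y) /\
  2 * re (ip (im_part K T Ta x) y) <= numrad K T * (nsq x + nsq y).
Proof.
  pose proof (re_im_ip_le_numrad (ips_add K x y)) as Hplus.
  pose proof (re_im_ip_le_numrad (ips_add K x (scale (-1) y))) as Hminus.
  rewrite T_additive in Hplus, Hminus; rewrite T_homogeneous in Hminus.
  revert Hplus Hminus; unfold re_part, im_part; ip_expand.
  rewrite (ip_conj y (Ta x)), <- T_adjoint, (ip_conj x y), (ip_self x), (ip_self y).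
  simpl; intros; split; lra.
Qed.

Lemma ipnorm_parts_le x : ipnorm K x <= 1 ->
  ipnorm K (re_part K T Ta x) <= numrad K T /\ ipnorm K (im_part K T Ta x) <= numrad K T.
Proof.
  intros Hx; pose proof (numrad_nonneg T) as Hw; apply nsq_le1_of_ipnorm_le1 in Hx.
  assert (Hpart : forall v, (forall y, 2 * re (ip v y) <= numrad K T * (nsq x + nsq y)) ->
                   ipnorm K v <= numrad K T).
  { intros v Hv; apply sqrt_le_of_le_sqr; auto.
    replace (numrad K T * numrad K T) with (numrad K T ^ 2) by ring.
    apply nsq_le_of_re_ip_le; auto.
    intros y; specialize (Hv y); pose proof (nsq_nonneg y); nra. }
  split; apply Hpart; intros y; apply re_ip_parts_le.
Qed.

Lemma nsq_parts_sum z :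
  nsq (re_part K T Ta z) + nsq (im_part K T Ta z) = (nsq (T z) + nsq (Ta z)) / 2.
Proof.
  unfold re_part, im_part; ip_expand.
  rewrite (ip_conj (T z) (Ta z)), (ip_self (T z)), (ip_self (Ta z)); simpl; field.
Qed.

Lemma unit_nsq_sum_le z : ipnorm K z = 1 ->
  nsq (T z) + nsq (Ta z) <= 2 * numrad K T ^ 2 + Dq K T Ta.
Proof.
  intros Hz; rewrite Dq_cartesian.
  assert (Hz1 : ipnorm K z <= 1) by lra.
  destruct (ipnorm_parts_le z Hz1) as [Hre Him].
  pose proof (ipnorm_le_opnorm _ _ (fun x Hx => proj1 (ipnorm_parts_le x Hx)) z Hz1).
  pose proof (ipnorm_le_opnorm _ _ (fun x Hx => proj2 (ipnorm_parts_le x Hx)) z Hz1).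
  pose proof (nsq_parts_sum z) as Hsum; rewrite <- !(ipnorm_sqr (re_part _ _ _ _)),
    <- !(ipnorm_sqr (im_part _ _ _ _)) in Hsum.
  pose proof (ipnorm_nonneg (re_part K T Ta z)).
  pose proof (ipnorm_nonneg (im_part K T Ta z)).
  unfold Rmin; destruct (Rle_dec _ _); nra.
Qed.

Lemma gq_le_numrad : gq K T Ta <= 2 * numrad K T ^ 2.
Proof.
  unfold gq; set (c := 2 * numrad K T ^ 2 + Dq K T Ta).
  assert (HD : 0 <= Dq K T Ta)
    by (rewrite Dq_cartesian; unfold Rmin; destruct (Rle_dec _ _); nra).
  pose proof (opnorm_nonneg T).
  destruct (classic (exists u, ipnorm K u = 1)) as [[u Hu]|Hnone].
  - assert (HT : forall z, ipnorm K z = 1 -> nsq (T z) <= c - alpha K Ta).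
    { intros z Hz; pose proof (unit_nsq_sum_le z Hz); pose proof (alpha_le Ta z Hz).
      unfold c; lra. }
    assert (HTa : forall z, ipnorm K z = 1 -> nsq (Ta z) <= c - alpha K T).
    { intros z Hz; pose proof (unit_nsq_sum_le z Hz); pose proof (alpha_le T z Hz).
      unfold c; lra. }
    assert (Hc1 : 0 <= c - alpha K Ta)
      by (pose proof (nsq_nonneg (T u)); pose proof (HT u Hu); lra).
    assert (Hc2 : 0 <= c - alpha K T)
      by (pose proof (nsq_nonneg (Ta u)); pose proof (HTa u Hu); lra).
    assert (H1 : opnorm K T <= sqrt (c - alpha K Ta)).
    { apply opnorm_le_of_unit; [apply sqrt_pos|].
      intros z Hz; apply sqrt_le_1_alt, HT, Hz. }
    assert (H2 : opnorm K T <= sqrt (c - alpha K T)).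
    { apply opnorm_le_of_adjoint_unit; [apply sqrt_pos|].
      intros z Hz; apply sqrt_le_1_alt, HTa, Hz. }
    apply pow2_le_of_le_sqrt in H1, H2; auto.
    unfold Rmax; destruct (Rle_dec _ _); unfold c in *; lra.
  - assert (Hno : forall z, ipnorm K z <> 1) by (intros z Hz; apply Hnone; eauto).
    rewrite (alpha_no_unit T Hno), (alpha_no_unit Ta Hno), Rmax_left by lra.
    assert (opnorm K T <= 0)
      by (apply opnorm_le_of_unit; [lra|intros z Hz; now destruct (Hno z)]).
    pose proof (numrad_nonneg T); nra.
Qed.

End Adjointable.

End InnerProductSpace.

Definition hilbert_ips (H : CHilbert) : IPS := mkIPS H (vadd H) (vscal H) (vinner H).

Lemma inner_product_hilbert (H : CHilbert) : is_inner_product (hilbert_ips H).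
Proof.
  repeat split; simpl.
  - apply inner_add_l.
  - apply inner_scal_l.
  - apply inner_conj.
  - apply inner_pos.
Qed.

Lemma inner_product_dsum (H : CHilbert) : is_inner_product (dsum H).
Proof.
  repeat split; simpl.
  - intros x y z; rewrite !inner_add_l; apply Cplx_ext; simpl; lra.
  - intros a x y; rewrite !inner_scal_l; apply Cplx_ext; simpl; lra.
  - intros x y; rewrite (inner_conj H (fst x)), (inner_conj H (snd x)).
    apply Cplx_ext; simpl; lra.
  - intros x; pose proof (inner_pos H (fst x)); pose proof (inner_pos H (snd x)); lra.
Qed.

Lemma hnorm_apply_le (H : CHilbert) (A : H -> H) :
  bounded_linear H A -> forall x, hnorm H (A x) <= hopnorm H A * hnorm H x.
Proof.
  intros (_ & Ahom & Abd).
  apply (opnorm_bound (hilbert_ips H) (inner_product_hilbert H));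
    [intros r x; apply Ahom | exact Abd].
Qed.

Lemma hopnorm_nonneg (H : CHilbert) (A : H -> H) : 0 <= hopnorm H A.
Proof. apply (opnorm_nonneg (hilbert_ips H)). Qed.

Lemma nsq_apply_le (H : CHilbert) (A : H -> H) :
  bounded_linear H A ->
  forall x, re (vinner H (A x) (A x)) <= hopnorm H A ^ 2 * re (vinner H x x).
Proof.
  intros HA x; pose proof (hnorm_apply_le H A HA x) as Hle.
  pose proof (ipnorm_sqr (hilbert_ips H) (inner_product_hilbert H) (A x)).
  pose proof (ipnorm_sqr (hilbert_ips H) (inner_product_hilbert H) x).
  pose proof (ipnorm_nonneg (hilbert_ips H) (A x)); pose proof (ipnorm_nonneg (hilbert_ips H) x).
  pose proof (hopnorm_nonneg H A).
  change (ipnorm (hilbert_ips H)) with (hnorm H) in *; simpl in *; nra.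
Qed.

Section OffDiagonal.

Variable H : CHilbert.
Variables Rop Sop Ra Sa : H -> H.
Hypothesis R_linear : bounded_linear H Rop.
Hypothesis S_linear : bounded_linear H Sop.

Local Notation T := (offdiag H Rop Sop).

Lemma offdiag_additive x y : T (ips_add (dsum H) x y) = ips_add (dsum H) (T x) (T y).
Proof.
  destruct R_linear as [Radd _], S_linear as [Sadd _].
  unfold offdiag; simpl; now rewrite Radd, Sadd.
Qed.

Lemma offdiag_homogeneous a x : T (ips_scal (dsum H) a x) = ips_scal (dsum H) a (T x).
Proof.
  destruct R_linear as (_ & Rhom & _), S_linear as (_ & Shom & _).
  unfold offdiag; simpl; now rewrite Rhom, Shom.
Qed.

Lemma offdiag_bounded :
  exists M, forall z, ipnorm (dsum H) (T z) <= M * ipnorm (dsum H) z.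
Proof.
  exists (hopnorm H Rop + hopnorm H Sop); intros [x y].
  unfold ipnorm, offdiag; cbn [ips_ip dsum fst snd re Cadd].
  pose proof (nsq_apply_le H Rop R_linear y); pose proof (nsq_apply_le H Sop S_linear x).
  pose proof (hopnorm_nonneg H Rop); pose proof (hopnorm_nonneg H Sop).
  pose proof (inner_pos H x); pose proof (inner_pos H y).
  rewrite <- (sqrt_square (hopnorm H Rop + hopnorm H Sop)), <- sqrt_mult by nra.
  apply sqrt_le_1_alt.
  set (a := hopnorm H Rop) in *; set (b := hopnorm H Sop) in *.
  assert (0 <= (2 * a * b + b ^ 2) * re (vinner H y y)) by (apply Rmult_le_pos; nra).
  assert (0 <= (2 * a * b + a ^ 2) * re (vinner H x x)) by (apply Rmult_le_pos; nra).
  nra.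
Qed.

Lemma offdiag_adjoint :
  is_adjoint H Rop Ra -> is_adjoint H Sop Sa ->
  forall z w, ips_ip (dsum H) (T z) w = ips_ip (dsum H) z (offdiag H Sa Ra w).
Proof.
  intros HRa HSa [x1 x2] [y1 y2]; unfold offdiag; simpl.
  rewrite HRa, HSa; apply Cplx_ext; simpl; lra.
Qed.

Lemma numrad_offdiag_le : numrad (dsum H) T <= (hopnorm H Rop + hopnorm H Sop) / 2.
Proof.
  pose proof (inner_product_hilbert H) as HH.
  pose proof (hopnorm_nonneg H Rop); pose proof (hopnorm_nonneg H Sop).
  apply Rsup_least; [|lra]; intros r [[x y] [Hz ->]]; unfold offdiag; simpl.
  pose proof (ipnorm_sqr _ (inner_product_dsum H) (x, y)) as Hxy.
  rewrite Hz in Hxy; simpl in Hxy.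
  pose proof (Cmod_triangle (vinner H (Rop y) x) (vinner H (Sop x) y)).
  pose proof (Cauchy_Schwarz _ HH (Rop y) x); pose proof (Cauchy_Schwarz _ HH (Sop x) y).
  pose proof (hnorm_apply_le H Rop R_linear y); pose proof (hnorm_apply_le H Sop S_linear x).
  pose proof (ipnorm_sqr _ HH x); pose proof (ipnorm_sqr _ HH y).
  pose proof (ipnorm_nonneg (hilbert_ips H) x); pose proof (ipnorm_nonneg (hilbert_ips H) y).
  change (ipnorm (hilbert_ips H)) with (hnorm H) in *; simpl in *.
  set (X := hnorm H x) in *; set (Y := hnorm H y) in *.
  assert (2 * X * Y <= 1) by (pose proof (pow2_ge_0 (X - Y)); nra).
  nra.
Qed.

End OffDiagonal.

Theorem corollary2p4 (H : CHilbert) (Rop Sop Ra Sa : H -> H) :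
  bounded_linear H Rop -> bounded_linear H Sop ->
  is_adjoint H Rop Ra -> is_adjoint H Sop Sa ->
  (hopnorm H Rop + hopnorm H Sop) ^ 2
    <= 2 * gq (dsum H) (offdiag H Rop Sop) (offdiag H Sa Ra) ->
  numrad (dsum H) (offdiag H Rop Sop) = (hopnorm H Rop + hopnorm H Sop) / 2.
Proof.
  intros HR HS HRa HSa Hg.
  pose proof (gq_le_numrad (dsum H) (inner_product_dsum H) _ (offdiag H Sa Ra)
    (offdiag_additive H Rop Sop HR HS) (offdiag_homogeneous H Rop Sop HR HS)
    (offdiag_bounded H Rop Sop HR HS) (offdiag_adjoint H Rop Sop Ra Sa HRa HSa)) as Hlower.
  pose proof (numrad_offdiag_le H Rop Sop HR HS) as Hupper.
  pose proof (numrad_nonneg (dsum H) (offdiag H Rop Sop)).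
  pose proof (hopnorm_nonneg H Rop); pose proof (hopnorm_nonneg H Sop).
  set (w := numrad (dsum H) (offdiag H Rop Sop)) in *.
  set (s := hopnorm H Rop + hopnorm H Sop) in *.
  assert (Hsq : s ^ 2 <= (2 * w) ^ 2) by lra.
  nra.
Qed.
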